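(* Let $(\mathcal{Y},\eta)$ be an $(n,m)$-voltage operator and let $\tau\in\operatorname{Aut}(\mathcal{Y})$ satisfy $\eta(W\tau)=\eta(W)$ for every $W\in\Pi(\mathcal{Y})$. Then for every $n$-premaniplex $\mathcal{X}$, the map $\tilde\tau:(x,y)\mapsto(x,y\tau)$ is an automorphism of $\mathcal{X}\rtimes_\eta\mathcal{Y}$; in particular $\tau$ has a lift to $\mathcal{X}\rtimes_\eta\mathcal{Y}$.
   Context: An $n$-premaniplex is an edge-coloured graph (semi-edges and parallel edges allowed) with colours $\{0,\dots,n-1\}$ such that every vertex (flag) is the start of exactly one dart of each colour, and for $|i-j|\ge2$ alternating $i,j$-paths of length 4 are closed; $x^i$ is the $i$-adjacent flag of $x$. $\mathcal{C}^n=\langle r_0,\dots,r_{n-1}\mid r_i^2,\ (r_ir_j)^2\ (|i-j|\ge2)\rangle$ acts on the left on flags by $r_ix=x^i$. Automorphisms (colour-preserving graph automorphisms) act on the right and map paths to paths, $W\mapsto W\tau$. For a flag $y$ of an $m$-premaniplex $\mathcal{Y}$ and $\omega\in\mathcal{C}^m$, $W_\omega(y)$ is the homotopy class of paths from $y$ whose colour sequence $i_1,\dots,i_k$ satisfies $r_{i_k}\cdots r_{i_1}=\omega$; these form the fundamental groupoid $\Pi(\mathcal{Y})$. A voltage assignment $\eta:\Pi(\mathcal{Y})\to\mathcal{C}^n$ satisfies $\eta(W_1W_2)=\eta(W_2)\eta(W_1)$; $(\mathcal{Y},\eta)$ is an $(n,m)$-voltage operator. $\mathcal{X}\rtimes_\eta\mathcal{Y}$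 has flags $\mathcal{X}\times\mathcal{Y}$ and $(x,y)^i=(\eta(W_{r_i}(y))x,r_iy)$, $i\in\{0,\dots,m-1\}$. An automorphism $\tau$ of $\mathcal{Y}$ lifts to $\mathcal{X}\rtimes_\eta\mathcal{Y}$ if there is $\tilde\tau\in\operatorname{Aut}(\mathcal{X}\rtimes_\eta\mathcal{Y})$ such that the $\mathcal{Y}$-coordinate of $(x,y)\tilde\tau$ is $y\tau$ for all $(x,y)$; $\tilde\tau$ is a lift of $\tau$. *)

From mathcomp Require Import all_boot.
From Stdlib Require Import Relation_Operators.
Set Implicit Arguments. Unset Strict Implicit. Unset Printing Implicit Defensive.

Definition far (n : nat) (i j : 'I_n) : bool := (i.+1 < j) || (j.+1 < i).

(* An n-premaniplex: a set of flags together with, for every colour i < n,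
   the i-adjacency x |-> x^i (the other end of the unique i-dart at x; a
   semi-edge is a fixed point, parallel edges are allowed). *)
Record premaniplex (n : nat) := Premaniplex {
  flag :> Type;
  adj : 'I_n -> flag -> flag;
  adj_invol : forall i x, adj i (adj i x) = x;
  adj_far : forall i j, far i j -> forall x, adj i (adj j (adj i (adj j x))) = x
}.
Arguments adj {n} p i x.

(* Words in the generators r_0..r_{n-1} of C^n.  The word [:: a1; ...; ak]
   represents the element r_{a1} r_{a2} ... r_{ak}, so concatenation is the
   group product. *)
Definition word (n : nat) := seq 'I_n.

(* One-step rewriting by the defining relators r_i^2 and (r_i r_j)^2
   (|i-j|>=2) of C^n (the latter in its equivalent commutation form). *)
Inductive cox_step (n : nat) : word n -> word n -> Prop :=
| cox_del (u v : word n) (i : 'I_n) : cox_step (u ++ i :: i :: v) (u ++ v)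
| cox_swap (u v : word n) (i j : 'I_n) :
    far i j -> cox_step (u ++ i :: j :: v) (u ++ j :: i :: v).

(* Equality in C^n = <r_i | r_i^2, (r_i r_j)^2 (|i-j|>=2)> of the elements
   represented by two words: the congruence generated by the relators. *)
Definition coxeq (n : nat) : word n -> word n -> Prop :=
  clos_refl_sym_trans (word n) (@cox_step n).

(* Left action of C^n on flags: r_i x = x^i, so
   act [:: a1; ...; ak] x = r_{a1} (r_{a2} ( ... (r_{ak} x))). *)
Definition act (n : nat) (X : premaniplex n) (w : word n) (x : X) : X :=
  foldr (fun i z => adj X i z) x w.

(* Elements of the fundamental groupoid Pi(Y): W_omega(y) is identified with
   the pair (y, omega) (start flag, element of C^m given by a word); it ends
   at the flag omega y.  W_{om1}(y) W_{om2}(om1 y) = W_{om2 om1}(y).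
   A voltage assignment eta : Pi(Y) -> C^n is given by representatives:
   eta y w is a word representing eta(W_w(y)); it must depend only on the
   class of w in C^m (up to equality in C^n) and satisfy
   eta(W1 W2) = eta(W2) eta(W1). *)
Record voltage_operator (m n : nat) (Y : premaniplex m) := VoltageOperator {
  eta :> Y -> word m -> word n;
  eta_wd : forall y w w', coxeq w w' -> coxeq (eta y w) (eta y w');
  eta_comp : forall y (w1 w2 : word m),
      coxeq (eta y (w2 ++ w1)) (eta (act w1 y) w2 ++ eta y w1)
}.

(* Automorphism (colour-preserving graph automorphism) of a flag graph with
   adjacencies adjF, acting on the right: x tau is written t x. *)
Definition is_aut (k : nat) (F : Type) (adjF : 'I_k -> F -> F) (t : F -> F)
  : Prop := bijective t /\ forall i x, t (adjF i x) = adjF i (t x).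

Definition is_premaniplex_aut (k : nat) (P : premaniplex k) (t : P -> P) : Prop :=
  is_aut (adj P) t.

Definition vprod_adj (m n : nat) (Y : premaniplex m) (e : voltage_operator n Y)
  (X : premaniplex n) (i : 'I_m) (p : X * Y) : X * Y :=
  (act (e p.2 [:: i]) p.1, adj Y i p.2).
Arguments vprod_adj {m n Y} e X i p.

From mathcomp Require Import all_boot.

Set Implicit Arguments.
Unset Strict Implicit.

(* The lift (x, y) |-> (x, y tau) commutes with the i-adjacency of X ⋊_eta Y
   because the X-coordinate of (x, y)^i is eta(W_{r_i}(y)) x, and the action of
   a word on the flags of X only depends on the element of C^n it represents. *)

Lemma adj_far_comm (n : nat) (X : premaniplex n) (i j : 'I_n) (x : X) :
  far i j -> adj X i (adj X j x) = adj X j (adj X i x).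
Proof.
move=> fij; have /(f_equal (adj X i)) := adj_far fij x.
by rewrite adj_invol => /(f_equal (adj X j)); rewrite adj_invol.
Qed.

Lemma act_cat (n : nat) (X : premaniplex n) (u v : word n) (x : X) :
  act (u ++ v) x = act u (act v x).
Proof. by rewrite /act foldr_cat. Qed.

Lemma act_coxeq (n : nat) (X : premaniplex n) (w w' : word n) :
  coxeq w w' -> forall x : X, act w x = act w' x.
Proof.
elim=> {w w'} [w w' [u v i | u v i j fij] x | // | w w' _ IH x
              | w1 w2 w3 _ IH12 _ IH23 x].
- by rewrite !act_cat /= adj_invol.
- by rewrite !act_cat /= adj_far_comm.
- by rewrite IH.
- by rewrite IH12 IH23.
Qed.

Lemma bij_map_snd (A B : Type) (f : B -> B) :
  bijective f -> bijective (fun p : A * B => (p.1, f p.2)).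
Proof.
case=> g fK gK.
by exists (fun p : A * B => (p.1, g p.2)) => -[a b] /=; rewrite ?fK ?gK.
Qed.

Lemma vprod_aut_map_snd (m n : nat) (Y : premaniplex m)
    (e : voltage_operator n Y) (X : premaniplex n) (tau : Y -> Y) :
  is_premaniplex_aut tau ->
  (forall (y : Y) (i : 'I_m), coxeq (e (tau y) [:: i]) (e y [:: i])) ->
  is_aut (vprod_adj e X) (fun p : X * Y => (p.1, tau p.2)).
Proof.
case=> tau_bij tau_adj e_tau; split; first exact: bij_map_snd.
by move=> i [x y]; rewrite /vprod_adj /= tau_adj (act_coxeq (e_tau y i)).
Qed.

Theorem theorem6p1 (m n : nat) (Y : premaniplex m) (e : voltage_operator n Y)
  (tau : Y -> Y) :
  is_premaniplex_aut tau ->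
  (forall (y : Y) (w : word m), coxeq (e (tau y) w) (e y w)) ->
  forall X : premaniplex n,
    is_aut (vprod_adj e X) (fun p : X * Y => (p.1, tau p.2)) /\
    exists tt : X * Y -> X * Y,
      is_aut (vprod_adj e X) tt /\ forall p, (tt p).2 = tau p.2.
Proof.
move=> tau_aut e_tau X.
have lift_aut := vprod_aut_map_snd X tau_aut (fun y i => e_tau y [:: i]).
by split; last exists (fun p : X * Y => (p.1, tau p.2)).
Qed.
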